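(* Let $f_0,g_0\in\mathbb{C}[z]$ be polynomials of length $\ell$ with nonzero constant coefficients, let $t$ be an element of the group $G_{\ell,\ell}=\langle s,n,h,r\rangle$ of permutations of $P_\ell\times P_\ell$, and let $(a_0,b_0)=t(f_0,g_0)$. Let $\sigma_0,\sigma_1,\ldots$ be a sequence in $\{-1,1\}$, and for $q\in\{f,g,a,b\}$ define $q_{m+1}(z)=q_m(z)+\sigma_m z^{\operatorname{len} q_m}q_m^\dagger(-z)$ for all $m\ge0$. Then \[ \lim_{m\to\infty}\mathrm{CDF}(a_m,b_m)=\lim_{m\to\infty}\mathrm{CDF}(f_m,g_m)\quad\text{and}\quad\lim_{m\to\infty}\mathrm{PSC}(a_m,b_m)=\lim_{m\to\infty}\mathrm{PSC}(f_m,g_m). \]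
   Context: For a polynomial $a(z)=a_0+\cdots+a_dz^d$ of degree $d$, $\operatorname{len}a=1+d$ and $a^\dagger(z)=\overline{a_d}+\overline{a_{d-1}}z+\cdots+\overline{a_0}z^d$; $q^\dagger(-z)$ means $q^\dagger$ evaluated at $-z$; $\widetilde{a}(z)=a(-z)$. $P_\ell$ is the set of polynomials of length $\ell$ in $\mathbb{C}[z]$ with nonzero constant coefficient, and $G_{\ell,\ell}$ is the group of permutations of $P_\ell\times P_\ell$ generated by $s(f,g)=(g,f)$, $n(f,g)=(-f,g)$, $h(f,g)=(\widetilde{f},\widetilde{g})$, $r(f,g)=(f^\dagger,g^\dagger)$. Polynomials are identified with coefficient sequences. For sequences $f,g$ of equal length, $C_{f,g}(s)=\sum_jf_{j+s}\overline{g_j}$; $\mathrm{CDF}(f,g)=\sum_s|C_{f,g}(s)|^2/(|C_{f,f}(0)||C_{g,g}(0)|)$ (equal to $\|fg\|_2^2/(\|f\|_2^2\|g\|_2^2)$ with $\|a\|_2^2=\frac{1}{2\pi}\int_0^{2\pi}|a(e^{i\theta})|^2d\theta$); $\mathrm{ADF}(f)=\mathrm{CDF}(f,f)-1$; and $\mathrm{PSC}(f,g)=\sqrt{\mathrm{ADF}(f)\mathrm{ADF}(g)}+\mathrm{CDF}(f,g)$. *)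

From HB Require Import structures.
From mathcomp Require Import all_boot all_order all_algebra.
From mathcomp Require Import all_classical all_reals all_analysis.
From mathcomp Require Import complex.

Set Implicit Arguments.
Unset Strict Implicit.
Unset Printing Implicit Defensive.

Import Order.TTheory GRing.Theory Num.Theory numFieldNormedType.Exports.
Local Open Scope ring_scope.

Section Defs.
Variable R : realType.
Local Notation C := (R[i]).

Definition cconj (x : C) : C := conjc x.
Definition sqmod (x : C) : R := (complex.Re x) ^+ 2 + (complex.Im x) ^+ 2.
Definition modc (x : C) : R := Num.sqrt (sqmod x).

Definition coefz (p : {poly C}) (k : int) : C :=
  match k with Posz n => p`_n | Negz _ => 0 end.

Definition corr (f g : {poly C}) (s : int) : C :=
  \sum_(j < size g) coefz f (s + (j : nat)%:Z) * cconj g`_j.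

(* CDF(f,g) = sum_s |C_{f,g}(s)|^2 / (|C_{f,f}(0)| |C_{g,g}(0)|);
   the sum runs over all shifts s with |s| < max(len f, len g), outside of
   which C_{f,g}(s) = 0. *)
Definition CDF (f g : {poly C}) : R :=
  let N := maxn (size f) (size g) in
  (\sum_(0 <= k < (N.*2).-1) sqmod (corr f g (k%:Z - (N.-1)%:Z)))
    / (modc (corr f f 0) * modc (corr g g 0)).

Definition ADF (f : {poly C}) : R := CDF f f - 1.

Definition PSC (f g : {poly C}) : R := Num.sqrt (ADF f * ADF g) + CDF f g.

Definition dagger (p : {poly C}) : {poly C} :=
  \poly_(i < size p) cconj p`_((size p).-1 - i).

Definition negz (p : {poly C}) : {poly C} := p \Po (- 'X).

Definition step (sg : C) (q : {poly C}) : {poly C} :=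
  q + sg *: ('X^(size q) * negz (dagger q)).

Fixpoint qseq (sigma : nat -> C) (q0 : {poly C}) (m : nat) : {poly C} :=
  match m with
  | 0 => q0
  | m'.+1 => step (sigma m') (qseq sigma q0 m')
  end.

End Defs.

Inductive gen := Gs | Gn | Gh | Gr.

Definition act_gen (R : realType) (x : gen) (p : {poly R[i]} * {poly R[i]}) :
  {poly R[i]} * {poly R[i]} :=
  let: (f, g) := p in
  match x with
  | Gs => (g, f)
  | Gn => (- f, g)
  | Gh => (negz f, negz g)
  | Gr => (dagger f, dagger g)
  end.

(* the group element represented by a word in the generators (composition);
   every element of G_{l,l} = <s,n,h,r> is of this form, since the
   generators are involutions on P_l x P_l. *)
Definition act_word (R : realType) (w : seq gen) (p : {poly R[i]} * {poly R[i]}) :=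
  foldr (@act_gen R) p w.

From HB Require Import structures.
From mathcomp Require Import all_boot all_order all_algebra.
From mathcomp Require Import all_classical all_reals all_analysis.
From mathcomp Require Import complex.
From mathcomp Require Import ring lra zify.
Import Order.TTheory GRing.Theory Num.Theory numFieldNormedType.Exports.
Set Implicit Arguments.
Unset Strict Implicit.
Unset Printing Implicit Defensive.
Local Open Scope ring_scope.

(* On the unit circle q^dagger(z) = z^(len q - 1) conj (q z), so the step reads
   q_{m+1}(z) = q_m(z) + w(z) conj (q_m(-z)) with |w| = 1 and w(-z) = -w(z).
   Averaging over z and -z (Parseval, realised as a mean over roots of unity)
   kills the cross terms: ||f_{m+1}||^2 = 2 ||f_m||^2, and the triple
   (||f g||^2, ||f g~||^2, 2 Re <f f~, g g~>) obeys a linear recurrence with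
   eigenvalues 4, 4, -2.  Since CDF (f_m, g_m) = ||f_m g_m||^2 / (4^m ||f||^2
   ||g||^2), it converges to a limit determined by ||f||, ||g|| and that triple,
   and these quantities are invariant under s, n, h and r (for r because
   |q^dagger| = |q| on the unit circle). *)

Lemma leq_pow2 n : (n <= 2 ^ n.+1)%N.
Proof. by apply: leq_trans (ltnW (ltn_expl n (isT : (1 < 2)%N))) _; rewrite leq_exp2l. Qed.

Lemma sum_ord_widen0 (V : nmodType) m n (F : nat -> V) : (m <= n)%N ->
  (forall i, (m <= i)%N -> F i = 0) -> \sum_(i < m) F i = \sum_(i < n) F i.
Proof.
move=> le_mn F0; rewrite (big_ord_widen _ F le_mn) big_mkcond.
by apply: eq_bigr => i _; case: ltnP => // /F0.
Qed.

Section CircleMean.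
Variable R : realType.
Local Notation C := R[i].

Definition root2 (K : nat) : C := iter K (@sqrtc R) (-1).

Lemma root2S K : root2 K.+1 = sqrtc (root2 K).
Proof. by []. Qed.

Lemma root2_half K : root2 K ^+ (2 ^ K)%N = -1.
Proof.
elim: K => [|K IH]; first by rewrite expn0 expr1.
by rewrite expnS exprM root2S sqr_sqrtc.
Qed.

Lemma root2_order K : root2 K ^+ (2 ^ K.+1)%N = 1.
Proof. by rewrite expnS mulnC exprM root2_half sqrrN expr1n. Qed.

Lemma norm_root2 K : `|root2 K| = 1.
Proof.
elim: K => [|K IH]; first by rewrite normrN normr1.
by apply/eqP; rewrite -sqrp_eq1 // -normrX root2S sqr_sqrtc IH.
Qed.

Lemma root2_prim K : (2 ^ K.+1).-primitive_root (root2 K).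
Proof.
have [m m_prim] := prim_order_exists (expn_gt0 2 K.+1) (root2_order K).
case/dvdn_pfactor=> // j j_le def_m; move: m_prim; rewrite def_m.
have [j_lt | j_ge] := ltnP j K.+1; last by have -> : j = K.+1 by lia.
move=> j_prim; have : (2 ^ j %| 2 ^ K)%N by rewrite dvdn_exp2l // -ltnS.
by rewrite (prim_order_dvd j_prim) root2_half eq_sym -subr_eq0 opprK -[1 + 1]/(2%:R) pnatr_eq0.
Qed.

(* Stands in for the normalised integral over the unit circle. *)
Definition circle_mean (K : nat) (h : C -> C) : C :=
  (2 ^ K.+1)%:R^-1 * \sum_(k < 2 ^ K.+1) h (root2 K ^+ k).

Section CircleMeanTheory.
Variable K : nat.
Local Notation M := (2 ^ K.+1)%N.

Lemma eq_circle_mean (h1 h2 : C -> C) :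
  (forall x, `|x| = 1 -> h1 x = h2 x) -> circle_mean K h1 = circle_mean K h2.
Proof.
move=> eq_h; congr (_ * _); apply: eq_bigr => k _.
by rewrite eq_h // normrX norm_root2 expr1n.
Qed.

Lemma circle_meanD (h1 h2 : C -> C) :
  circle_mean K (fun x => h1 x + h2 x) = circle_mean K h1 + circle_mean K h2.
Proof. by rewrite /circle_mean big_split mulrDr. Qed.

Lemma circle_meanB (h1 h2 : C -> C) :
  circle_mean K (fun x => h1 x - h2 x) = circle_mean K h1 - circle_mean K h2.
Proof. by rewrite /circle_mean sumrB mulrBr. Qed.

Lemma circle_meanZ c (h : C -> C) :
  circle_mean K (fun x => c * h x) = c * circle_mean K h.
Proof. by rewrite /circle_mean -mulr_sumr mulrCA. Qed.

Lemma circle_mean_conj (h : C -> C) :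
  circle_mean K (fun x => (h x)^*) = (circle_mean K h)^*.
Proof. by rewrite /circle_mean rmorphM fmorphV rmorph_nat rmorph_sum. Qed.

Lemma circle_meanN (h : C -> C) : circle_mean K (fun x => h (- x)) = circle_mean K h.
Proof.
have M_gt0 : (0 < M)%N by rewrite expn_gt0.
pose shift (k : 'I_M) : 'I_M := Ordinal (ltn_pmod (k + 2 ^ K) M_gt0).
have shift_inj : injective shift.
  move=> i j /(congr1 val) /eqP; rewrite /= eqn_modDr !modn_small //.
  by move=> /eqP /val_inj.
rewrite [RHS]/circle_mean (reindex_inj shift_inj); congr (_ * _).
apply: eq_bigr => k _ /=.
by rewrite expr_mod ?root2_order // exprD root2_half mulrN1.
Qed.

Lemma circle_mean_sym (h : C -> C) :
  circle_mean K h = 2^-1 * circle_mean K (fun x => h x + h (- x)).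
Proof. by rewrite circle_meanD circle_meanN; field. Qed.

End CircleMeanTheory.

Definition pdot (p q : {poly C}) : C := \sum_(i < size p) p`_i * (q`_i)^*.

Lemma pdot_widen (p q : {poly C}) n :
  (size p <= n)%N -> pdot p q = \sum_(i < n) p`_i * (q`_i)^*.
Proof.
move=> le_pn; apply: (@sum_ord_widen0 _ _ _ (fun i => p`_i * (q`_i)^*)) => // i.
by move=> /(nth_default 0) ->; rewrite mul0r.
Qed.

Lemma sum_root2_pow K (i j : 'I_(2 ^ K.+1)) :
  \sum_(k < 2 ^ K.+1) (root2 K ^+ i * (root2 K ^+ j)^*) ^+ k
    = (i == j)%:R * (2 ^ K.+1)%:R.
Proof.
set w := root2 K; set M := (2 ^ K.+1)%N.
have unit_pow m : w ^+ m * (w ^+ m)^* = 1.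
  by rewrite -normCK normrX norm_root2 !expr1n.
have [<-|ne_ij] := eqVneq i j.
  by rewrite unit_pow mul1r; under eq_bigr do rewrite expr1n; rewrite sumr_const card_ord.
rewrite mul0r; set z := _ * _.
have zM : z ^+ M = 1.
  by rewrite exprMn -rmorphXn -!exprM !(mulnC _ M) !exprM root2_order !expr1n rmorph1 mulr1.
have z_neq1 : z != 1.
  apply: contra ne_ij => /eqP z1; apply/eqP/val_inj.
  have : w ^+ i = w ^+ j by rewrite -[RHS]mul1r -z1 -mulrA [_^* * _]mulrC unit_pow mulr1.
  by move/eqP; rewrite (eq_prim_root_expr (root2_prim K)) !modn_small // => /eqP.
have := subrX1 z M; rewrite zM subrr => /esym/eqP.
by rewrite mulf_eq0 subr_eq0 (negbTE z_neq1) => /eqP.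
Qed.

Lemma circle_mean_poly K (p q : {poly C}) :
  (size p <= 2 ^ K.+1)%N -> (size q <= 2 ^ K.+1)%N ->
  circle_mean K (fun x => p.[x] * (q.[x])^*) = pdot p q.
Proof.
set M := (2 ^ K.+1)%N => sp sq.
have M_neq0 : M%:R != 0 :> C by rewrite pnatr_eq0 -lt0n expn_gt0.
have pow_swap (x : C) k i j : (x ^+ k) ^+ i * ((x ^+ k) ^+ j)^* = (x ^+ i * (x ^+ j)^*) ^+ k.
  by rewrite exprMn !rmorphXn -!exprM mulnC [(j * k)%N]mulnC.
rewrite (pdot_widen _ sp) /circle_mean; apply: (mulfI M_neq0); rewrite mulVKf //.
rewrite mulr_sumr.
under eq_bigr => k _ do
  rewrite (horner_coef_wide _ sp) (horner_coef_wide _ sq) rmorph_sum mulr_suml.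
rewrite exchange_big /=; apply: eq_bigr => i _.
under eq_bigr => k _ do rewrite mulr_sumr.
rewrite exchange_big /=.
under eq_bigr => j _ do under eq_bigr => k _ do
  rewrite rmorphM mulrACA pow_swap.
under eq_bigr => j _ do rewrite -mulr_sumr sum_root2_pow.
rewrite (bigD1 i) //= eqxx mul1r big1 ?addr0; first by rewrite mulrC.
by move=> j /negbTE; rewrite eq_sym => ->; rewrite mul0r mulr0.
Qed.

End CircleMean.

Section Energies.
Variable R : realType.
Local Notation C := R[i].
Local Notation "r %:C" := (real_complex R r).

Lemma mul_conj_norm1 (x : C) : `|x| = 1 -> x * x^* = 1.
Proof. by rewrite -normCK => ->; rewrite expr1n. Qed.

Definition sqnorm (p : {poly C}) : R := \sum_(i < size p) sqmod p`_i.

Definition cross (f g : {poly C}) : R :=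
  2 * complex.Re (pdot (f * negz f) (g * negz g)).

Definition cross_integrand (f g : {poly C}) (x : C) : C :=
  f.[x] * f.[- x] * (g.[x] * g.[- x])^* + (f.[x] * f.[- x])^* * (g.[x] * g.[- x]).

Lemma sqmodE (z : C) : (sqmod z)%:C = `|z| ^+ 2.
Proof. by rewrite /sqmod add_Re2_Im2. Qed.

Lemma sqnorm_pdot (p : {poly C}) : (sqnorm p)%:C = pdot p p.
Proof. by rewrite /sqnorm rmorph_sum; apply: eq_bigr => i _; rewrite -normCK -sqmodE. Qed.

Lemma conj_pdot (p q : {poly C}) : (pdot p q)^* = pdot q p.
Proof.
rewrite !(@pdot_widen _ _ _ (size p + size q)) ?leq_addl ?leq_addr // rmorph_sum.
by apply: eq_bigr => i _; rewrite rmorphM /= conjCK mulrC.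
Qed.

Lemma cross_pdot (f g : {poly C}) :
  (cross f g)%:C = pdot (f * negz f) (g * negz g) + pdot (g * negz g) (f * negz f).
Proof. by rewrite -(conj_pdot (f * _)) /cross rmorphM rmorph_nat (addcJ (pdot _ _)). Qed.

Lemma horner_negz (p : {poly C}) x : (negz p).[x] = p.[- x].
Proof. by rewrite /negz horner_comp hornerN hornerX. Qed.

Lemma size_negz (p : {poly C}) : size (negz p) = size p.
Proof. by rewrite /negz size_comp_poly2 // size_polyN size_polyX. Qed.

Lemma pdot_Xn (p : {poly C}) e : (size p <= e)%N -> pdot p 'X^e = 0.
Proof.
move=> le_pe; apply: big1 => i _; rewrite coefXn.
case: eqP => [eq_ie|_]; last by rewrite rmorph0 mulr0.
by move: (ltn_ord i); rewrite eq_ie ltnNge le_pe.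
Qed.

Section Means.
Variable K : nat.
Local Notation M := (2 ^ K.+1)%N.

Lemma mean_sqnorm (p : {poly C}) :
  (size p <= M)%N -> circle_mean K (fun x => `|p.[x]| ^+ 2) = (sqnorm p)%:C.
Proof.
move=> sp; rewrite sqnorm_pdot -(@circle_mean_poly _ K) //.
by apply: eq_circle_mean => x _; rewrite normCK.
Qed.

Lemma mean_sqnorm_sym (p : {poly C}) : (size p <= M)%N ->
  circle_mean K (fun x => `|p.[x]| ^+ 2 + `|p.[- x]| ^+ 2) = 2 * (sqnorm p)%:C.
Proof.
move=> sp; rewrite circle_meanD (circle_meanN K (fun x => `|p.[x]| ^+ 2)).
by rewrite mean_sqnorm // -mulr2n mulr_natl.
Qed.

Lemma mean_cross (f g : {poly C}) :
  (size (f * negz f)%R <= M)%N -> (size (g * negz g)%R <= M)%N ->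
  circle_mean K (cross_integrand f g) = (cross f g)%:C.
Proof.
move=> sf sg; rewrite cross_pdot -!(@circle_mean_poly _ K) // -circle_meanD.
by apply: eq_circle_mean => x _; rewrite /cross_integrand !hornerM !horner_negz [_^* * _]mulrC.
Qed.

End Means.

Lemma eq_sqnorm (p q : {poly C}) :
  (forall x, `|x| = 1 -> `|p.[x]| = `|q.[x]|) -> sqnorm p = sqnorm q.
Proof.
move=> eq_pq; set K := (size p + size q)%N.
have bound r : (size r <= K)%N -> (size r <= 2 ^ K.+1)%N.
  by move/leq_trans; apply; apply: leq_pow2.
apply: complexI; rewrite -!(@mean_sqnorm K) ?bound ?leq_addl ?leq_addr //.
by apply: eq_circle_mean => x /eq_pq ->.
Qed.

Lemma eq_cross (f g f' g' : {poly C}) :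
  (forall x, `|x| = 1 -> cross_integrand f g x = cross_integrand f' g' x) ->
  cross f g = cross f' g'.
Proof.
move=> eq_fg; set K := (size f + size g + size f' + size g').*2.
have fits (p : {poly C}) : (size p <= size f + size g + size f' + size g')%N ->
    (size (p * negz p)%R <= 2 ^ K.+1)%N.
  move=> sp; apply: leq_trans (leq_pow2 K); apply: leq_trans (size_polyMleq _ _) _.
  by rewrite size_negz /K; lia.
apply: complexI.
rewrite -(@mean_cross K f g) ?fits -?(@mean_cross K f' g') ?fits; try lia.
exact: eq_circle_mean.
Qed.

End Energies.

Section StepIdentities.
Variable R : realType.
Local Notation C := R[i].
Variables (a a' b b' w : C).
Hypothesis w_norm : `|w| = 1.

Local Notation A := (a + w * a'^*).
Local Notation A' := (a' - w * a^*).
Local Notation B := (b + w * b'^*).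
Local Notation B' := (b' - w * b^*).
Local Notation X := (a * a' * (b * b')^* + (a * a')^* * (b * b')).
Local Notation Z := (w^* ^+ 2 * (a * a' * (b * b')) + (w^* ^+ 2 * (a * a' * (b * b')))^*).
Local Notation P := (`|a * b| ^+ 2 + `|a' * b'| ^+ 2).
Local Notation Q := (`|a * b'| ^+ 2 + `|a' * b| ^+ 2).

(* A, A' (resp. B, B') are the values at x and -x of a stepped polynomial
   (horner_step, horner_stepN); adding the two points cancels every term that
   is odd in w. *)

Let w_neq0 : w != 0.
Proof. by rewrite -normr_eq0 w_norm oner_eq0. Qed.

Let conj_w : w^* = w^-1.
Proof. by rewrite invC_norm w_norm expr1n invr1 mul1r. Qed.

Lemma step_sqnorm_sym : `|A| ^+ 2 + `|A'| ^+ 2 = 2 * (`|a| ^+ 2 + `|a'| ^+ 2).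
Proof.
rewrite !normCK !(rmorphD, rmorphB, rmorphN, rmorphM) /= !conjCK conj_w.
by field.
Qed.

Lemma step_prod_sym : `|A * B| ^+ 2 + `|A' * B'| ^+ 2 = 2 * (P + Q + X + Z).
Proof.
rewrite !normCK !(rmorphD, rmorphB, rmorphN, rmorphM, rmorphXn) /=.
by rewrite !conjCK conj_w; field.
Qed.

Lemma step_twist_sym : `|A * B'| ^+ 2 + `|A' * B| ^+ 2 = 2 * (P + Q - X - Z).
Proof.
rewrite !normCK !(rmorphD, rmorphB, rmorphN, rmorphM, rmorphXn) /=.
by rewrite !conjCK conj_w; field.
Qed.

Lemma step_cross : A * A' * (B * B')^* + (A * A')^* * (B * B') = 2 * (P - Q + X - Z).
Proof.
rewrite !normCK !(rmorphD, rmorphB, rmorphN, rmorphM, rmorphXn) /=.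
by rewrite !conjCK conj_w; field.
Qed.

End StepIdentities.

Section StepOnCircle.
Variable R : realType.
Local Notation C := R[i].

Lemma horner_dagger (p : {poly C}) x :
  `|x| = 1 -> (dagger p).[x] = x ^+ (size p).-1 * (p.[x])^*.
Proof.
move=> /mul_conj_norm1 x_unit.
rewrite /dagger horner_poly (horner_coef p x) rmorph_sum mulr_sumr.
rewrite (reindex_inj rev_ord_inj) /=; apply: eq_bigr => j _.
set n := size p; have j_lt : (j < n)%N := ltn_ord j.
have -> : (n - j.+1 = n.-1 - j)%N by lia.
have -> : (n.-1 - (n.-1 - j) = j)%N by lia.
rewrite /cconj rmorphM rmorphXn /=.
have -> : x ^+ n.-1 = x ^+ (n.-1 - j) * x ^+ j by rewrite -exprD subnK //; lia.
rewrite mulrC -mulrA; congr (_ * _).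
by rewrite mulrCA -exprMn x_unit expr1n mulr1.
Qed.

Lemma norm_horner_dagger (p : {poly C}) x : `|x| = 1 -> `|(dagger p).[x]| = `|p.[x]|.
Proof. by move=> x1; rewrite horner_dagger // normrM normrX x1 expr1n mul1r norm_conjC. Qed.

Definition step_twist (s : C) (n : nat) (x : C) : C := s * x ^+ n * (- x) ^+ n.-1.

Lemma horner_step s (q : {poly C}) x : `|x| = 1 ->
  (step s q).[x] = q.[x] + step_twist s (size q) x * (q.[- x])^*.
Proof.
move=> x1; rewrite /step hornerD hornerZ hornerM hornerXn horner_negz.
by rewrite horner_dagger ?normrN // /step_twist !mulrA.
Qed.

Lemma step_twistN s n x : (0 < n)%N -> step_twist s n (- x) = - step_twist s n x.
Proof. by case: n => // n _; rewrite /step_twist opprK /= !exprS; ring. Qed.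

Lemma horner_stepN s (q : {poly C}) x : (0 < size q)%N -> `|x| = 1 ->
  (step s q).[- x] = q.[- x] - step_twist s (size q) x * (q.[x])^*.
Proof.
by move=> q_gt0 x1; rewrite horner_step ?normrN // opprK step_twistN // mulNr.
Qed.

Lemma norm_step_twist s n x : `|s| = 1 -> `|x| = 1 -> `|step_twist s n x| = 1.
Proof. by move=> s1 x1; rewrite !normrM !normrX normrN s1 x1 !expr1n !mulr1. Qed.

Lemma step_twist_sqr s n x : s ^+ 2 = 1 -> (0 < n)%N ->
  step_twist s n x ^+ 2 = x ^+ (n + n.-1).*2.
Proof.
move=> s2; case: n => // n _ /=.
rewrite /step_twist !exprMn s2 mul1r [((- x) ^+ n) ^+ 2]exprAC sqrrN -!exprM -exprD.
by congr (_ ^+ _); lia.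
Qed.

Lemma size_step_le s (q : {poly C}) : (size (step s q) <= (size q).*2)%N.
Proof.
rewrite /step -addnn; apply: leq_trans (size_polyD _ _) _; rewrite geq_max leq_addr /=.
apply: leq_trans (size_scale_leq _ _) _; apply: leq_trans (size_polyMleq _ _) _.
by rewrite size_polyXn size_negz /= leq_add2l size_poly.
Qed.

Lemma size_dagger (p : {poly C}) : p`_0 != 0 -> size (dagger p) = size p.
Proof. by move=> p0; rewrite /dagger size_poly_eq // subnn /cconj conjC_eq0. Qed.

Lemma coef0_size_gt0 (q : {poly C}) : q`_0 != 0 -> (0 < size q)%N.
Proof. by rewrite size_poly_gt0; apply: contraNneq => ->; rewrite coef0. Qed.

Lemma step_coef0 s (q : {poly C}) : q`_0 != 0 -> (step s q)`_0 = q`_0.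
Proof. by move=> /coef0_size_gt0 q_gt0; rewrite /step coefD coefZ coefXnM q_gt0 mulr0 addr0. Qed.

Lemma size_step s (q : {poly C}) : s != 0 -> q`_0 != 0 ->
  size (step s q) = (size q).*2.
Proof.
move=> s0 q0; have q_neq0 : q != 0 by rewrite -size_poly_gt0 coef0_size_gt0.
have r_size : size (negz (dagger q)) = size q by rewrite size_negz size_dagger.
have r_neq0 : negz (dagger q) != 0 by rewrite -size_poly_eq0 r_size size_poly_eq0.
have twist_size : size (s *: ('X^(size q) * negz (dagger q))) = (size q).*2.
  by rewrite size_scale // mulrC size_mulXn // r_size addnn.
rewrite /step addrC size_polyDl twist_size //.
by move: q_neq0; rewrite -size_poly_eq0; lia.
Qed.

End StepOnCircle.

Section StepRecurrence.
Variable R : realType.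
Local Notation C := R[i].
Local Notation "r %:C" := (real_complex R r).

Variables (s : C) (f : {poly C}) (n : nat).
Hypotheses (s_sqr : s ^+ 2 = 1) (n_gt0 : (0 < n)%N) (size_f : size f = n).

(* 2^(4n+1) roots of unity suffice: no polynomial below has more than 4n
   coefficients. *)
Local Notation mean := (circle_mean (4 * n)).
Local Notation w x := (step_twist s n x).

Let s_norm : `|s| = 1.
Proof. by apply/eqP; rewrite -sqrp_eq1 // -normrX s_sqr normr1. Qed.

Let twist_norm x : `|x| = 1 -> `|w x| = 1.
Proof. exact: norm_step_twist. Qed.

Let f_gt0 : (0 < size f)%N. Proof. by rewrite size_f. Qed.
Let small_f : (size f <= n.*2)%N. Proof. by rewrite size_f -addnn leq_addr. Qed.

Let small4 (p : {poly C}) : (size p <= (n.*2).*2)%N -> (size p <= 2 ^ (4 * n).+1)%N.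
Proof.
move=> sp; apply: leq_trans sp _.
have -> : ((n.*2).*2 = 4 * n)%N by lia.
exact: leq_pow2.
Qed.

Let small2 (p : {poly C}) : (size p <= n.*2)%N -> (size p <= 2 ^ (4 * n).+1)%N.
Proof. by move=> sp; apply: small4; apply: leq_trans sp _; lia. Qed.

Let small_step (q : {poly C}) : size q = n -> (size (step s q) <= n.*2)%N.
Proof. by move=> <-; apply: size_step_le. Qed.

Lemma sqnorm_step : sqnorm (step s f) = 2 * sqnorm f.
Proof.
apply: complexI.
rewrite -(@mean_sqnorm _ (4 * n)) ?small2 ?small_step // circle_mean_sym.
rewrite (@eq_circle_mean _ _ _ (fun x => 2 * (`|f.[x]| ^+ 2 + `|f.[- x]| ^+ 2))).
  by rewrite circle_meanZ mean_sqnorm_sym ?small2 // [RHS]rmorphM rmorph_nat; field.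
move=> x x1; rewrite horner_stepN // horner_step // size_f.
exact: step_sqnorm_sym (twist_norm x1).
Qed.

Variable g : {poly C}.
Hypothesis size_g : size g = n.

Let g_gt0 : (0 < size g)%N. Proof. by rewrite size_g. Qed.
Let small_g : (size g <= n.*2)%N. Proof. by rewrite size_g -addnn leq_addr. Qed.
Let small_negz (q : {poly C}) : (size q <= n.*2)%N -> (size (negz q) <= n.*2)%N.
Proof. by rewrite size_negz. Qed.

Let small_mul (p q : {poly C}) : (size p <= n.*2)%N -> (size q <= n.*2)%N ->
  (size (p * q)%R <= 2 ^ (4 * n).+1)%N.
Proof.
move=> sp sq; apply: small4; apply: leq_trans (size_polyMleq _ _) _.
by rewrite -addnn; apply: leq_trans (leq_pred _) (leq_add sp sq).
Qed.

Let prod_sq x := `|f.[x] * g.[x]| ^+ 2 + `|f.[- x] * g.[- x]| ^+ 2.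
Let twist_sq x := `|f.[x] * g.[- x]| ^+ 2 + `|f.[- x] * g.[x]| ^+ 2.
Let twist_term x := (w x)^* ^+ 2 * (f.[x] * f.[- x] * (g.[x] * g.[- x]))
  + ((w x)^* ^+ 2 * (f.[x] * f.[- x] * (g.[x] * g.[- x])))^*.

Let mean_prod_sq : mean (fun x => prod_sq x) = 2 * (sqnorm (f * g))%:C.
Proof.
rewrite -(@mean_sqnorm_sym _ (4 * n)) ?small_mul //.
by apply: eq_circle_mean => x _; rewrite /prod_sq !hornerM.
Qed.

Let mean_twist_sq : mean (fun x => twist_sq x) = 2 * (sqnorm (f * negz g))%:C.
Proof.
rewrite -(@mean_sqnorm_sym _ (4 * n)) ?small_mul ?small_negz //.
by apply: eq_circle_mean => x _; rewrite /twist_sq !hornerM !horner_negz opprK.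
Qed.

(* w x ^+ 2 is the monomial x ^+ (4n - 2), of larger degree than f f~ g g~. *)
Let mean_twist_term : mean (fun x => twist_term x) = 0.
Proof.
set e := (n + n.-1).*2; set P := f * negz f * (g * negz g).
have size_P : (size P <= e)%N.
  apply: leq_trans (size_polyMleq _ _) _.
  have := size_polyMleq f (negz f); have := size_polyMleq g (negz g).
  rewrite !size_negz size_f size_g /e; lia.
have mean_half : mean (fun x => (w x)^* ^+ 2 * (f.[x] * f.[- x] * (g.[x] * g.[- x]))) = 0.
  have e_small : (e < (n.*2).*2)%N by rewrite /e; lia.
  rewrite -(pdot_Xn size_P) -(@circle_mean_poly _ (4 * n)) ?small4 ?size_polyXn //; last first.
    exact: leq_trans size_P (ltnW e_small).
  apply: eq_circle_mean => x _.
  by rewrite hornerXn -rmorphXn step_twist_sqr // !hornerM !horner_negz mulrC.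
by rewrite circle_meanD mean_half add0r circle_mean_conj mean_half rmorph0.
Qed.

Lemma sqnorm_step_mul : sqnorm (step s f * step s g) =
  2 * sqnorm (f * g) + 2 * sqnorm (f * negz g) + cross f g.
Proof.
apply: complexI; rewrite -(@mean_sqnorm _ (4 * n)) ?small_mul ?small_step //.
rewrite circle_mean_sym (@eq_circle_mean _ _ _
  (fun x => 2 * (prod_sq x + twist_sq x + cross_integrand f g x + twist_term x))).
  rewrite circle_meanZ 3!circle_meanD mean_prod_sq mean_twist_sq mean_twist_term.
  rewrite (mean_cross (K := 4 * n)) ?small_mul ?small_negz //.
  by rewrite ![RHS](rmorphD, rmorphM, rmorph_nat); field.
move=> x x1; rewrite !hornerM !horner_stepN // !horner_step // size_f size_g.
exact: step_prod_sym (twist_norm x1).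
Qed.

Lemma sqnorm_step_twist : sqnorm (step s f * negz (step s g)) =
  2 * sqnorm (f * g) + 2 * sqnorm (f * negz g) - cross f g.
Proof.
apply: complexI; rewrite -(@mean_sqnorm _ (4 * n)) ?small_mul ?small_negz ?small_step //.
rewrite circle_mean_sym (@eq_circle_mean _ _ _
  (fun x => 2 * (prod_sq x + twist_sq x - cross_integrand f g x - twist_term x))).
  rewrite circle_meanZ 2!circle_meanB circle_meanD mean_prod_sq mean_twist_sq mean_twist_term.
  rewrite (mean_cross (K := 4 * n)) ?small_mul ?small_negz //.
  by rewrite ![RHS](rmorphB, rmorphD, rmorphM, rmorph_nat); field.
move=> x x1; rewrite !hornerM !horner_negz opprK !horner_stepN // !horner_step // size_f size_g.
exact: step_twist_sym (twist_norm x1).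
Qed.

Lemma cross_step : cross (step s f) (step s g) =
  4 * sqnorm (f * g) - 4 * sqnorm (f * negz g) + 2 * cross f g.
Proof.
apply: complexI; rewrite -(mean_cross (K := 4 * n)) ?small_mul ?small_negz ?small_step //.
rewrite (@eq_circle_mean _ _ _
  (fun x => 2 * (prod_sq x - twist_sq x + cross_integrand f g x - twist_term x))).
  rewrite circle_meanZ circle_meanB circle_meanD circle_meanB.
  rewrite mean_prod_sq mean_twist_sq mean_twist_term (mean_cross (K := 4 * n)) ?small_mul ?small_negz //.
  by rewrite ![RHS](rmorphB, rmorphD, rmorphM, rmorph_nat); field.
move=> x x1; rewrite /cross_integrand !horner_stepN // !horner_step // size_f size_g.
exact: step_cross (twist_norm x1).
Qed.

End StepRecurrence.

Section CDFFormula.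
Variable R : realType.
Local Notation C := R[i].
Local Notation "r %:C" := (real_complex R r).

Lemma coefz_sub (p : {poly C}) (k j : nat) :
  coefz p (k%:Z - j%:Z) = if (j <= k)%N then p`_(k - j) else 0.
Proof.
case: leqP => le_jk; first by rewrite subzn.
by have -> : k%:Z - j%:Z = Negz (j - k.+1) by rewrite NegzE; lia.
Qed.

Lemma corr_coef (f g : {poly C}) k :
  corr f g (k%:Z - (size g).-1%:Z) = (f * dagger g)`_k.
Proof.
set N := size g.
pose G j := if (j <= k)%N then f`_(k - j) * (dagger g)`_j else 0.
have dagger_small j : (N <= j)%N -> (dagger g)`_j = 0.
  by move=> le_Nj; rewrite /dagger coef_poly ltnNge le_Nj.
transitivity (\sum_(j < N) G j).
  rewrite /corr (reindex_inj rev_ord_inj) /=; apply: eq_bigr => j _.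
  have j_lt : (j < N)%N := ltn_ord j.
  have -> : k%:Z - N.-1%:Z + (N - j.+1)%N%:Z = k%:Z - j%:Z by lia.
  rewrite coefz_sub /G /dagger coef_poly j_lt /cconj.
  have -> : (N - j.+1 = N.-1 - j)%N by lia.
  by case: ifP; rewrite ?mul0r.
rewrite coefMr (eq_bigr (fun j : 'I_k.+1 => G j)); last first.
  by move=> j _; rewrite /G -ltnS ltn_ord.
transitivity (\sum_(j < N + k.+1) G j).
  apply: sum_ord_widen0 => [|j /dagger_small]; first exact: leq_addr.
  by rewrite /G => ->; rewrite mulr0; case: ifP.
symmetry; apply: sum_ord_widen0 => [|j]; first exact: leq_addl.
by rewrite ltnNge => /negbTE; rewrite /G => ->.
Qed.

Lemma sqnorm_ge0 (p : {poly C}) : 0 <= sqnorm p.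
Proof. by apply: sumr_ge0 => i _; rewrite addr_ge0 ?sqr_ge0. Qed.

Lemma sqnorm_widen (p : {poly C}) n :
  (size p <= n)%N -> sqnorm p = \sum_(i < n) sqmod p`_i.
Proof.
move=> le_pn; apply: (@sum_ord_widen0 _ _ _ (fun i => sqmod p`_i)) => // i.
by move=> /(nth_default 0) ->; rewrite /sqmod /= expr0n addr0.
Qed.

Lemma corr_self (p : {poly C}) : corr p p 0 = (sqnorm p)%:C.
Proof. by rewrite sqnorm_pdot /corr /pdot; apply: eq_bigr => j _; rewrite add0r. Qed.

Lemma modc_real (r : R) : 0 <= r -> modc r%:C = r.
Proof. by move=> r_ge0; rewrite /modc /sqmod /= expr0n addr0 sqrtr_sqr ger0_norm. Qed.

Lemma CDF_sqnorm (f g : {poly C}) : size f = size g ->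
  CDF f g = sqnorm (f * g) / (sqnorm f * sqnorm g).
Proof.
move=> eq_fg; rewrite /CDF /= eq_fg maxnn !corr_self !modc_real ?sqnorm_ge0 //.
congr (_ / _); rewrite big_mkord.
under eq_bigr do rewrite corr_coef.
rewrite -sqnorm_widen; last first.
  have : (size (dagger g) <= size g)%N by apply: size_poly.
  by have := size_polyMleq f (dagger g); rewrite eq_fg; lia.
by apply: eq_sqnorm => x x1; rewrite !hornerM !normrM norm_horner_dagger.
Qed.

End CDFFormula.

Local Open Scope classical_set_scope.

Section Recurrence.
Variable R : realType.

Definition recurrence_limit (I J K : R) : R := (I + J) / 2 + (I - J + K) / 6.

Lemma normalized_recurrence_cvg (I J K : nat -> R) :
  (forall m, I m.+1 = 2 * I m + 2 * J m + K m) ->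
  (forall m, J m.+1 = 2 * I m + 2 * J m - K m) ->
  (forall m, K m.+1 = 4 * I m - 4 * J m + 2 * K m) ->
  (fun m => I m / 4 ^+ m) @ \oo --> recurrence_limit (I 0) (J 0) (K 0).
Proof.
move=> eI eJ eK.
(* I + J and I - J + K are multiplied by 4 at each step, 2 (I - J) - K by -2. *)
have geo (u : nat -> R) r : (forall m, u m.+1 = r * u m) -> forall m, u m = r ^+ m * u 0.
  by move=> eu; elim=> [|m IH]; rewrite ?expr0 ?mul1r // eu IH exprS mulrA.
have u_geo : forall m, I m + J m = 4 ^+ m * (I 0 + J 0).
  by apply: (geo (fun m => I m + J m)) => m; rewrite eI eJ; ring.
have d_geo : forall m, I m - J m + K m = 4 ^+ m * (I 0 - J 0 + K 0).
  by apply: (geo (fun m => I m - J m + K m)) => m; rewrite eI eJ eK; ring.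
have e_geo : forall m, 2 * (I m - J m) - K m = (-2) ^+ m * (2 * (I 0 - J 0) - K 0).
  by apply: (geo (fun m => 2 * (I m - J m) - K m)) => m; rewrite eI eJ eK; ring.
set c := (2 * (I 0 - J 0) - K 0) / 6.
have I_eq m : I m / 4 ^+ m = recurrence_limit (I 0) (J 0) (K 0) + c * (- 2^-1) ^+ m.
  have -> : I m = (I m + J m) / 2 + (I m - J m + K m) / 6 + (2 * (I m - J m) - K m) / 6.
    by field.
  rewrite u_geo d_geo e_geo.
  have -> : (-2 : R) ^+ m = 4 ^+ m * (- 2^-1) ^+ m.
    by rewrite -exprMn; congr (_ ^+ _); field.
  rewrite /recurrence_limit /c; field.
  by rewrite expf_neq0 // pnatr_eq0.
have half_lt1 : `|- 2^-1 : R| < 1 by rewrite normrN ger0_norm ?invr_ge0 ?ler0n //; lra.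
rewrite (funext I_eq) -[X in _ --> X]addr0 -(mulr0 c).
exact: cvgD (cvg_cst _) (cvgM (cvg_cst _) (cvg_expr half_lt1)).
Qed.

End Recurrence.

Section IteratedSteps.
Variable R : realType.
Local Notation C := R[i].

Definition cdf_limit (f g : {poly C}) : R :=
  recurrence_limit (sqnorm (f * g)) (sqnorm (f * negz g)) (cross f g)
    / (sqnorm f * sqnorm g).

Definition psc_limit (f g : {poly C}) : R :=
  Num.sqrt ((cdf_limit f f - 1) * (cdf_limit g g - 1)) + cdf_limit f g.

Variable sigma : nat -> C.
Hypothesis sigma_sqr : forall m, sigma m ^+ 2 = 1.

Let sigma_neq0 m : sigma m != 0.
Proof. by apply: contra_eq_neq (sigma_sqr m) => ->; rewrite expr0n eq_sym oner_eq0. Qed.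

Lemma qseq_coef0 (q : {poly C}) m : q`_0 != 0 -> (qseq sigma q m)`_0 = q`_0.
Proof. by move=> q0; elim: m => //= m IH; rewrite step_coef0 // IH. Qed.

Lemma size_qseq (q : {poly C}) m : q`_0 != 0 ->
  size (qseq sigma q m) = (size q * 2 ^ m)%N.
Proof.
move=> q0; elim: m => [|m IH]; first by rewrite muln1.
by rewrite /= size_step ?qseq_coef0 // IH expnS -muln2 [(2 * _)%N]mulnC mulnA.
Qed.

Lemma sqnorm_qseq (q : {poly C}) m : q`_0 != 0 ->
  sqnorm (qseq sigma q m) = 2 ^+ m * sqnorm q.
Proof.
move=> q0; elim: m => [|m IH] /=; first by rewrite mul1r.
rewrite (sqnorm_step (sigma_sqr m) _ (erefl _)) ?IH ?exprS ?mulrA //.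
by rewrite size_qseq // muln_gt0 expn_gt0 coef0_size_gt0.
Qed.

Section Pair.
Variables f g : {poly C}.
Hypotheses (size_fg : size f = size g) (f0 : f`_0 != 0) (g0 : g`_0 != 0).

Local Notation F m := (qseq sigma f m).
Local Notation G m := (qseq sigma g m).

Let size_FG m : size (F m) = size (G m).
Proof. by rewrite !size_qseq // size_fg. Qed.

Let size_F_gt0 m : (0 < size (F m))%N.
Proof. by rewrite size_qseq // muln_gt0 expn_gt0 coef0_size_gt0. Qed.

Lemma CDF_qseq_cvg : (fun m => CDF (F m) (G m)) @ \oo --> cdf_limit f g.
Proof.
have cvgI : (fun m => sqnorm (F m * G m) / 4 ^+ m) @ \oo -->
    recurrence_limit (sqnorm (f * g)) (sqnorm (f * negz g)) (cross f g).
  apply: (@normalized_recurrence_cvg _ (fun m => sqnorm (F m * G m))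
    (fun m => sqnorm (F m * negz (G m))) (fun m => cross (F m) (G m))) => m.
  - exact (sqnorm_step_mul (sigma_sqr m) (size_F_gt0 m) (erefl _) (esym (size_FG m))).
  - exact (sqnorm_step_twist (sigma_sqr m) (size_F_gt0 m) (erefl _) (esym (size_FG m))).
  - exact (cross_step (sigma_sqr m) (size_F_gt0 m) (erefl _) (esym (size_FG m))).
have -> : (fun m => CDF (F m) (G m)) =
    (fun m => sqnorm (F m * G m) / 4 ^+ m / (sqnorm f * sqnorm g)).
  apply: funext => m; rewrite CDF_sqnorm // !sqnorm_qseq //.
  by rewrite mulrACA -exprMn -natrM invfM mulrA.
exact: cvgM cvgI (cvg_cst _).
Qed.

End Pair.

Lemma PSC_qseq_cvg (f g : {poly C}) : size f = size g -> f`_0 != 0 -> g`_0 != 0 ->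
  (fun m => PSC (qseq sigma f m) (qseq sigma g m)) @ \oo --> psc_limit f g.
Proof.
move=> size_fg f0 g0; rewrite /PSC /ADF.
apply: cvgD; last exact (CDF_qseq_cvg size_fg f0 g0).
apply: (continuous_cvg _ (@sqrt_continuous R _)).
by apply: cvgM; apply: cvgB; [exact (CDF_qseq_cvg (erefl _) f0 f0) | exact: cvg_cst
  | exact (CDF_qseq_cvg (erefl _) g0 g0) | exact: cvg_cst].
Qed.

End IteratedSteps.

Section Invariance.
Variable R : realType.
Local Notation C := R[i].

Lemma negzM (p q : {poly C}) : negz (p * q) = negz p * negz q.
Proof. exact: comp_polyM. Qed.

Lemma negzN (p : {poly C}) : negz (- p) = - negz p.
Proof. by rewrite /negz -[- p]sub0r comp_polyB comp_poly0 sub0r. Qed.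

Lemma negzK (p : {poly C}) : negz (negz p) = p.
Proof.
rewrite /negz -comp_polyA.
have -> : (- 'X : {poly C}) \Po (- 'X) = 'X.
  by rewrite -[_ \Po _]/(negz (- 'X)) negzN /negz comp_polyX opprK.
exact: comp_polyXr.
Qed.

Lemma sqnorm_negz (p : {poly C}) : sqnorm (negz p) = sqnorm p.
Proof.
set K := size p; have sp : (size p <= 2 ^ K.+1)%N by apply: leq_pow2.
apply: complexI; rewrite -!(@mean_sqnorm _ K) ?size_negz //.
rewrite -[RHS](circle_meanN K (fun x => `|p.[x]| ^+ 2)).
by apply: eq_circle_mean => x _; rewrite horner_negz.
Qed.

Lemma sqnorm_opp (p : {poly C}) : sqnorm (- p) = sqnorm p.
Proof. by apply: eq_sqnorm => x _; rewrite hornerN normrN. Qed.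

Lemma crossC (f g : {poly C}) : cross g f = cross f g.
Proof. by rewrite /cross -conj_pdot; case: (pdot _ _). Qed.

Lemma cdf_limitC (f g : {poly C}) : cdf_limit g f = cdf_limit f g.
Proof.
have twistC : sqnorm (g * negz f) = sqnorm (f * negz g).
  by rewrite -sqnorm_negz negzM negzK mulrC.
by rewrite /cdf_limit [g * f]mulrC twistC crossC [sqnorm g * _]mulrC.
Qed.

Lemma cdf_limitNl (f g : {poly C}) : cdf_limit (- f) g = cdf_limit f g.
Proof. by rewrite /cdf_limit /cross negzN mulrNN !mulNr !sqnorm_opp. Qed.

Lemma cdf_limit_negz (f g : {poly C}) : cdf_limit (negz f) (negz g) = cdf_limit f g.
Proof.
have twist : negz f * negz (negz g) = negz (f * negz g) by rewrite negzM.
rewrite /cdf_limit twist -negzM !sqnorm_negz /cross !negzK.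
by rewrite [negz f * f]mulrC [negz g * g]mulrC.
Qed.

Lemma cdf_limit_dagger (f g : {poly C}) : size f = size g ->
  cdf_limit (dagger f) (dagger g) = cdf_limit f g.
Proof.
move=> size_fg.
have sqnorm_dagger p : sqnorm (dagger p) = sqnorm p.
  by apply: eq_sqnorm => x /norm_horner_dagger.
have sqnorm_daggerM p q : sqnorm (dagger p * dagger q) = sqnorm (p * q).
  by apply: eq_sqnorm => x x1; rewrite !hornerM !normrM !norm_horner_dagger.
have sqnorm_dagger_twist p q : sqnorm (dagger p * negz (dagger q)) = sqnorm (p * negz q).
  by apply: eq_sqnorm => x x1; rewrite !hornerM !horner_negz !normrM !norm_horner_dagger ?normrN.
have rotate (c1 c2 a a' b b' : C) : `|c1| = 1 -> `|c2| = 1 ->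
    c1 * a^* * (c2 * a'^*) * (c1 * b^* * (c2 * b'^*))^*
      + (c1 * a^* * (c2 * a'^*))^* * (c1 * b^* * (c2 * b'^*))
    = a * a' * (b * b')^* + (a * a')^* * (b * b').
  move=> /mul_conj_norm1 c1_unit /mul_conj_norm1 c2_unit.
  transitivity (c1 * c1^* * (c2 * c2^*) * (a^* * a'^* * (b * b') + a * a' * (b * b')^*)).
    by rewrite !rmorphM /= !conjCK; ring.
  by rewrite c1_unit c2_unit !mul1r addrC !rmorphM /=.
have cross_dagger : cross (dagger f) (dagger g) = cross f g.
  apply: eq_cross => x x1; rewrite /cross_integrand !horner_dagger ?normrN // -size_fg.
  by apply: rotate; rewrite normrX ?normrN x1 expr1n.
by rewrite /cdf_limit sqnorm_daggerM sqnorm_dagger_twist cross_dagger !sqnorm_dagger.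
Qed.

Lemma psc_limitC (f g : {poly C}) : psc_limit g f = psc_limit f g.
Proof. by rewrite /psc_limit cdf_limitC mulrC. Qed.

End Invariance.

Section GroupAction.
Variable R : realType.
Local Notation C := R[i].

Lemma dagger_coef0 (p : {poly C}) : p != 0 -> (dagger p)`_0 != 0.
Proof.
move=> p_neq0; rewrite /dagger coef_poly size_poly_gt0 p_neq0 subn0 /cconj conjC_eq0.
by rewrite -lead_coefE lead_coef_eq0.
Qed.

Lemma negz_coef0 (p : {poly C}) : (negz p)`_0 = p`_0.
Proof. by rewrite -!horner_coef0 horner_negz oppr0. Qed.

(* (f, g) lies in P_l x P_l for l = size f. *)
Definition admissible (p : {poly C} * {poly C}) : Prop :=
  [/\ size p.1 = size p.2, p.1`_0 != 0 & p.2`_0 != 0].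

Definition limits (p : {poly C} * {poly C}) : R * R :=
  (cdf_limit p.1 p.2, psc_limit p.1 p.2).

Lemma act_gen_limits x p : admissible p ->
  admissible (act_gen x p) /\ limits (act_gen x p) = limits p.
Proof.
case: p => f g [/= size_fg f0 g0]; case: x; rewrite /limits /=.
- by split; [split | rewrite cdf_limitC psc_limitC].
- have cdfNN : cdf_limit (- f) (- f) = cdf_limit f f.
    by rewrite cdf_limitNl cdf_limitC cdf_limitNl.
  split; first by split; rewrite /= ?size_polyN ?coefN ?oppr_eq0.
  by rewrite /psc_limit cdfNN !cdf_limitNl.
- split; first by split; rewrite /= ?size_negz ?negz_coef0.
  by rewrite /psc_limit !cdf_limit_negz.
- have f_neq0 : f != 0 by rewrite -size_poly_gt0 coef0_size_gt0.
  have g_neq0 : g != 0 by rewrite -size_poly_gt0 coef0_size_gt0.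
  split; first by split; rewrite /= ?size_dagger ?dagger_coef0.
  by rewrite /psc_limit !cdf_limit_dagger.
Qed.

Lemma act_word_limits t p : admissible p ->
  admissible (act_word t p) /\ limits (act_word t p) = limits p.
Proof.
move=> adm_p; elim: t => [|x t [adm_t lim_t]]; first by [].
have [adm_xt lim_xt] := act_gen_limits x adm_t.
by split => //; rewrite -lim_t -lim_xt.
Qed.

End GroupAction.

Theorem corollary3p5 (R : realType) (l : nat) (f0 g0 : {poly R[i]})
  (hf : size f0 = l) (hf0 : f0`_0 != 0)
  (hg : size g0 = l) (hg0 : g0`_0 != 0)
  (t : seq gen) (a0 b0 : {poly R[i]})
  (hab : act_word t (f0, g0) = (a0, b0))
  (sigma : nat -> R[i]) (hsigma : forall m, sigma m = 1 \/ sigma m = -1) :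
  (exists L : R,
     (fun m => CDF (qseq sigma a0 m) (qseq sigma b0 m)) @ \oo --> L /\
     (fun m => CDF (qseq sigma f0 m) (qseq sigma g0 m)) @ \oo --> L) /\
  (exists L : R,
     (fun m => PSC (qseq sigma a0 m) (qseq sigma b0 m)) @ \oo --> L /\
     (fun m => PSC (qseq sigma f0 m) (qseq sigma g0 m)) @ \oo --> L).
Proof.
have sigma_sqr m : sigma m ^+ 2 = 1 by case: (hsigma m) => ->; rewrite ?sqrrN expr1n.
have size_fg : size f0 = size g0 by rewrite hf hg.
have [] := @act_word_limits R t (f0, g0) (And3 size_fg hf0 hg0).
rewrite hab => -[/= size_ab a0_neq0 b0_neq0] [/= cdf_ab psc_ab].
split; [exists (cdf_limit f0 g0) | exists (psc_limit f0 g0)]; split.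
- by rewrite -cdf_ab; exact (CDF_qseq_cvg sigma_sqr size_ab a0_neq0 b0_neq0).
- exact (CDF_qseq_cvg sigma_sqr size_fg hf0 hg0).
- by rewrite -psc_ab; exact (PSC_qseq_cvg sigma_sqr size_ab a0_neq0 b0_neq0).
- exact (PSC_qseq_cvg sigma_sqr size_fg hf0 hg0).
Qed.
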